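(* Let $\mathbb K=[-1,1]$ and let $H:[-1,1]\times\mathbb R\to\mathbb R$ with $H(x,0)=0$ for all $x$ satisfy (H1) and (H4). Then $v_-:=\lim_{p\to-\infty}\partial_pH(-1,p)$ and $v_+:=\lim_{p\to\infty}\partial_pH(1,p)$ exist with $v_-\ge0$, $v_+\le0$, one has $\lim_{p\to-\infty}H(-1,p)/p=v_-$ and $\lim_{p\to\infty}H(1,p)/p=v_+$, and $\partial_pH(-1,p)>0$, $\partial_pH(1,p)<0$ for all $p\in\mathbb R$. If moreover $H$ satisfies (H3), then for every $c\in\mathbb R$, every $(a,q)\in(-1,1)\times(0,\infty)$ and every $(b,r)\in(-1,1)\times(-\infty,0)$ the set $\big((Q^+_{a,q})^\circ\cup(Q^-_{b,r})^\circ\big)^c\cap H^{-1}((-\infty,c])$ is compact.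
   Context: Conditions, for $\mathbb K=[-1,1]$: (H1) $H$ is $C^2$ with $\partial_p^2H>0$ on $[-1,1]\times\mathbb R$ and is the restriction of a $C^2$ function on $(-1-\epsilon,1+\epsilon)\times\mathbb R$ for some $\epsilon>0$. (H3) for each compact $K\subseteq(-1,1)$, $\lim_{|p|\to\infty}\inf_{x\in K}H(x,p)/|p|=\infty$, and $\lim_{p\to\infty}H(-1,p)/p=\infty$, $\lim_{p\to-\infty}H(1,p)/(-p)=\infty$. (H4) $\lim_{x\to-1}\operatorname{argmin}_pH(x,p)=-\infty$ and $\lim_{x\to1}\operatorname{argmin}_pH(x,p)=+\infty$. Quadrants: $Q^+_{y,q}=\{(x,p)\in[-1,1]\times\mathbb R:x\ge y,p\ge q\}$, $Q^-_{y,q}=\{(x,p)\in[-1,1]\times\mathbb R:x\le y,p\le q\}$, interiors taken in $[-1,1]\times\mathbb R$; complements taken in $[-1,1]\times\mathbb R$. *)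

From Stdlib Require Import Reals Lra List.
Open Scope R_scope.

Definition ball2 (x p d x' p' : R) : Prop := (x' - x)^2 + (p' - p)^2 < d^2.

Definition open2 (U : R -> R -> Prop) : Prop :=
  forall x p, U x p -> exists d, d > 0 /\ forall x' p', ball2 x p d x' p' -> U x' p'.

Definition compact2 (K : R -> R -> Prop) : Prop :=
  forall (I : Type) (U : I -> R -> R -> Prop),
    (forall i, open2 (U i)) ->
    (forall x p, K x p -> exists i, U i x p) ->
    exists l : list I, forall x p, K x p -> exists i, In i l /\ U i x p.

Definition cont2_on (U : R -> R -> Prop) (G : R -> R -> R) : Prop :=
  forall x p, U x p -> forall e, e > 0 -> exists d, d > 0 /\
    forall x' p', ball2 x p d x' p' -> Rabs (G x' p' - G x p) < e.

Definition C2_on (U : R -> R -> Prop) (G : R -> R -> R) : Prop :=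
  exists G1 G2 G11 G12 G21 G22 : R -> R -> R,
    (forall x p, U x p ->
       derivable_pt_lim (fun y => G y p) x (G1 x p) /\
       derivable_pt_lim (fun q => G x q) p (G2 x p) /\
       derivable_pt_lim (fun y => G1 y p) x (G11 x p) /\
       derivable_pt_lim (fun q => G1 x q) p (G12 x p) /\
       derivable_pt_lim (fun y => G2 y p) x (G21 x p) /\
       derivable_pt_lim (fun q => G2 x q) p (G22 x p)) /\
    cont2_on U G /\ cont2_on U G1 /\ cont2_on U G2 /\
    cont2_on U G11 /\ cont2_on U G12 /\ cont2_on U G21 /\ cont2_on U G22.

Definition strip (x p : R) : Prop := -1 <= x <= 1.

(* (H1), regularity part: H restricted to [-1,1] x R is the restriction of a
   C^2 function on (-1-eps,1+eps) x R.  (The convexity part d_p^2 H > 0 is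
   stated in the theorem.) *)
Definition H1_ext (H : R -> R -> R) : Prop :=
  exists eps, eps > 0 /\ exists G : R -> R -> R,
    C2_on (fun x _ => -1 - eps < x < 1 + eps) G /\
    (forall x p, -1 <= x <= 1 -> G x p = H x p).

Definition H3 (H : R -> R -> R) : Prop :=
  (forall K : R -> Prop, compact K -> (forall x, K x -> -1 < x < 1) ->
     forall M, exists P, forall x p, K x -> Rabs p > P -> H x p / Rabs p >= M) /\
  (forall M, exists P, forall p, p > P -> H (-1) p / p >= M) /\
  (forall M, exists P, forall p, p < P -> H 1 p / (- p) >= M).

(* (H4): argmin_p H(x,p) exists for x near -1 (x > -1) and tends to -infinity,
   and exists for x near 1 (x < 1) and tends to +infinity.  (By strict
   convexity in p the minimiser is unique when it exists.) *)
Definition H4 (H : R -> R -> R) : Prop :=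
  (forall M, exists d, d > 0 /\ forall x, -1 < x < -1 + d ->
     exists m, m < M /\ forall q, H x m <= H x q) /\
  (forall M, exists d, d > 0 /\ forall x, 1 - d < x < 1 ->
     exists m, m > M /\ forall q, H x m <= H x q).

Definition lim_minf (f : R -> R) (l : R) : Prop :=
  forall e, e > 0 -> exists P, forall p, p < P -> Rabs (f p - l) < e.
Definition lim_pinf (f : R -> R) (l : R) : Prop :=
  forall e, e > 0 -> exists P, forall p, p > P -> Rabs (f p - l) < e.

Definition Qplus (y q x p : R) : Prop := strip x p /\ x >= y /\ p >= q.
Definition Qminus (y q x p : R) : Prop := strip x p /\ x <= y /\ p <= q.

Definition rel_interior (S A : R -> R -> Prop) (x p : R) : Prop :=
  A x p /\ exists d, d > 0 /\ forall x' p', S x' p' -> ball2 x p d x' p' -> A x' p'.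

(* Strict convexity makes [Hp x] increasing, so [Hp x p > 0] as soon as [p] lies
   above a global minimiser of [H x].  Since these minimisers tend to [-oo] as
   [x -> -1], continuity of [Hp] forces [Hp (-1) >= 0], and then [> 0] by strict
   monotonicity.  The increasing bounded function [Hp (-1)] has a limit at [-oo],
   which by the mean value theorem is also the limit of [H (-1) p / p].
   For compactness, [H (-1) 1 > 0], continuity and the superhomogeneity
   [t H(x,s) <= H(x,ts)] ([t >= 1]) of a convex function vanishing at [0] make [H]
   exceed [c] for large [p] near [x = -1], and (H3) does so on the rest of
   [[-1, a]]; points with [x > a] and large [p] lie in the interior of [Q^+_{a,q}].
   Hence the set is bounded; it is closed because [H] is continuous and the
   quadrant interiors are relatively open.  The end [x = 1] follows from the point
   reflection [(x, p) |-> (-x, -p)], which preserves the hypotheses and swaps the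
   two ends of the strip. *)

From Stdlib Require Import Reals Lra List Classical FunctionalExtensionality.
Open Scope R_scope.

Module RectangleCompact.
From HB Require Import structures.
From mathcomp Require Import all_boot all_order all_algebra.
From mathcomp Require Import all_classical all_reals all_analysis.
From mathcomp Require Import Rstruct Rstruct_topology.
Import Order.TTheory GRing.Theory Num.Theory.
Local Open Scope classical_set_scope.

Definition RR := (R * R)%type.
HB.instance Definition _ := Topological.on RR.
HB.instance Definition _ := Pointed.on RR.

Definition uncurry2 (U : R -> R -> Prop) : set RR := fun z => U z.1 z.2.

Lemma open2_open (U : R -> R -> Prop) : open2 U -> open (uncurry2 U).
Proof.
move=> Uop; rewrite openE => z Uz.
have [d [d0 Hd]] := Uop _ _ Uz.
apply/nbhs_ballP; exists (Rdiv d 2); first by apply/RltP; change (Rlt 0 (Rdiv d 2)); lra.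
case=> w1 w2 [/= /RltP h1 /RltP h2]; apply: Hd; rewrite /ball2.
change (Rlt (Rabs (Rminus z.1 w1)) (Rdiv d 2)) in h1.
change (Rlt (Rabs (Rminus z.2 w2)) (Rdiv d 2)) in h2.
rewrite -(pow2_abs (w1 - z.1)) -(pow2_abs (w2 - z.2)) Rabs_minus_sym (Rabs_minus_sym w2).
have := Rabs_pos (z.1 - w1); have := Rabs_pos (z.2 - w2).
nra.
Qed.

Lemma cover_list (I : Type) (U : I -> R -> R -> Prop) (s : seq (set RR)) :
  (forall V, V \in s -> exists i, V = uncurry2 (U i)) ->
  exists l : list I, forall V, V \in s -> exists i, In i l /\ V = uncurry2 (U i).
Proof.
elim: s => [|V s IH] Hs; first by exists nil => V; rewrite in_nil.
have [l Hl] : exists l : list I,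
    forall W, W \in s -> exists i, In i l /\ W = uncurry2 (U i).
  by apply: IH => W Ws; apply: Hs; rewrite in_cons Ws orbT.
have [i Hi] := Hs V (mem_head _ _).
exists (i :: l) => W; rewrite in_cons => /orP [/eqP -> | Ws].
  by exists i; split => //; left.
by have [j [jl Hj]] := Hl W Ws; exists j; split => //; right.
Qed.

Lemma compact2_rectangle (a b c d : R) :
  compact2 (fun x p => Rle a x /\ Rle x b /\ (Rle c p /\ Rle p d)).
Proof.
move=> I U Uop Ucov.
have : compact (T:=RR) (`[a, b] `*` `[c, d]).
  exact: compact_setX (@segment_compact R a b) (@segment_compact R c d).
rewrite compact_cover => Kc.
pose D := [set V : set RR | exists i, V = uncurry2 (U i)].
have opD : forall V, D V -> open V by move=> V [i ->]; exact: open2_open.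
have cov : `[a, b] `*` `[c, d] `<=` \bigcup_(V in D) V.
  case=> x p; rewrite /= !in_itv /= => -[/andP [/RleP h1 /RleP h2] /andP [/RleP h3 /RleP h4]].
  have [i Ui] := Ucov x p (conj h1 (conj h2 (conj h3 h4))).
  by exists (uncurry2 (U i)) => //; exists i.
have [F FD Fcov] := Kc _ D id opD cov.
have [l Hl] := @cover_list I U (finmap.enum_fset F) (fun V VF => set_mem (FD V VF)).
exists l => x p [h1 [h2 [h3 h4]]].
have : (`[a, b] `*` `[c, d]) (x, p).
  by split; rewrite /= in_itv /=; apply/andP; split; apply/RleP.
move/Fcov => [V VF Vxp].
have [i [il Vi]] := Hl V VF.
by exists i; split => //; rewrite Vi in Vxp.
Qed.

End RectangleCompact.

Lemma ball2_coord x p d x' p' :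
  ball2 x p d x' p' -> 0 < d -> - d < x' - x < d /\ - d < p' - p < d.
Proof.
  unfold ball2. intros Hb Hd.
  pose proof (pow2_ge_0 (x' - x)). pose proof (pow2_ge_0 (p' - p)).
  repeat split; apply Rnot_le_lt; intros Hle; nra.
Qed.

Lemma ball2_center x p d : 0 < d -> ball2 x p d x p.
Proof. unfold ball2. intros Hd. nra. Qed.

Lemma ball2_half_trans x p d x' p' x'' p'' :
  ball2 x p (d / 2) x' p' -> ball2 x' p' (d / 2) x'' p'' -> ball2 x p d x'' p''.
Proof.
  unfold ball2. intros H1 H2.
  pose proof (pow2_ge_0 ((x' - x) - (x'' - x'))).
  pose proof (pow2_ge_0 ((p' - p) - (p'' - p'))).
  nra.
Qed.

Lemma compact2_closed_subset (K C : R -> R -> Prop) :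
  compact2 C -> (forall x p, K x p -> C x p) -> open2 (fun x p => ~ K x p) ->
  compact2 K.
Proof.
  intros HC HKC Hop I U Uop Ucov.
  destruct (HC (option I)
    (fun o => match o with Some i => U i | None => fun x p => ~ K x p end))
    as [l Hl].
  - intros [i|]; auto.
  - intros x p _. destruct (classic (K x p)) as [Kx|nKx].
    + destruct (Ucov x p Kx) as [i Hi]. exists (Some i); exact Hi.
    + exists None; exact nKx.
  - exists (flat_map (fun o => match o with Some i => i :: nil | None => nil end) l).
    intros x p Kx. destruct (Hl x p (HKC x p Kx)) as [[i|] [Hin HU]].
    + exists i. split; [|exact HU]. apply in_flat_map. exists (Some i). simpl; auto.
    + contradiction.
Qed.

Lemma not_strip_nbhd x p :
  ~ strip x p -> exists d, d > 0 /\ forall x' p', ball2 x p d x' p' -> ~ strip x' p'.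
Proof.
  unfold strip. intros Hx.
  destruct (Rlt_or_le x (-1)) as [Hlt|Hge].
  - exists (-1 - x). split; [lra|]. intros x' p' Hb [Hx' _].
    destruct (ball2_coord _ _ _ _ _ Hb ltac:(lra)). lra.
  - assert (Hgt : 1 < x) by (apply Rnot_le_lt; intros Hle; apply Hx; lra).
    exists (x - 1). split; [lra|]. intros x' p' Hb [_ Hx'].
    destruct (ball2_coord _ _ _ _ _ Hb ltac:(lra)). lra.
Qed.

Lemma rel_interior_nbhd (S A : R -> R -> Prop) x p :
  rel_interior S A x p ->
  exists d, d > 0 /\ forall x' p', ball2 x p d x' p' -> S x' p' -> rel_interior S A x' p'.
Proof.
  intros [_ [d [Hd HA]]].
  exists (d / 2). split; [lra|]. intros x' p' Hb HS. split.
  - apply HA; [exact HS|]. apply (ball2_half_trans x p d x p); [|exact Hb].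
    apply ball2_center; lra.
  - exists (d / 2). split; [lra|]. intros x'' p'' HS'' Hb''.
    apply HA; [exact HS''|]. exact (ball2_half_trans _ _ _ _ _ _ _ Hb Hb'').
Qed.

Lemma Qplus_rel_interior a q x p :
  -1 <= x <= 1 -> a < x -> q < p -> rel_interior strip (Qplus a q) x p.
Proof.
  intros Hx Hax Hqp. split; [unfold Qplus, strip; lra|].
  exists (Rmin (x - a) (p - q)). split; [apply Rmin_glb_lt; lra|].
  intros x' p' Hs Hb.
  pose proof (Rmin_l (x - a) (p - q)). pose proof (Rmin_r (x - a) (p - q)).
  destruct (ball2_coord _ _ _ _ _ Hb ltac:(apply Rmin_glb_lt; lra)).
  unfold Qplus. split; [exact Hs|lra].
Qed.

Lemma Qminus_rel_interior b r x p :
  -1 <= x <= 1 -> x < b -> p < r -> rel_interior strip (Qminus b r) x p.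
Proof.
  intros Hx Hxb Hpr. split; [unfold Qminus, strip; lra|].
  exists (Rmin (b - x) (r - p)). split; [apply Rmin_glb_lt; lra|].
  intros x' p' Hs Hb.
  pose proof (Rmin_l (b - x) (r - p)). pose proof (Rmin_r (b - x) (r - p)).
  destruct (ball2_coord _ _ _ _ _ Hb ltac:(apply Rmin_glb_lt; lra)).
  unfold Qminus. split; [exact Hs|lra].
Qed.

Definition cont_strip (G : R -> R -> R) : Prop :=
  forall x p, strip x p -> forall e, e > 0 -> exists d, d > 0 /\
    forall x' p', strip x' p' -> ball2 x p d x' p' -> Rabs (G x' p' - G x p) < e.

Lemma cont_strip_lt (G : R -> R -> R) c x p :
  cont_strip G -> strip x p -> G x p < c ->
  exists d, d > 0 /\ forall x' p', strip x' p' -> ball2 x p d x' p' -> G x' p' < c.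
Proof.
  intros HG Hs Hlt. destruct (HG x p Hs (c - G x p) ltac:(lra)) as [d [Hd Hc]].
  exists d. split; [exact Hd|]. intros x' p' Hs' Hb.
  destruct (Rabs_def2 _ _ (Hc x' p' Hs' Hb)). lra.
Qed.

Lemma cont_strip_gt (G : R -> R -> R) c x p :
  cont_strip G -> strip x p -> c < G x p ->
  exists d, d > 0 /\ forall x' p', strip x' p' -> ball2 x p d x' p' -> c < G x' p'.
Proof.
  intros HG Hs Hlt. destruct (HG x p Hs (G x p - c) ltac:(lra)) as [d [Hd Hc]].
  exists d. split; [exact Hd|]. intros x' p' Hs' Hb.
  destruct (Rabs_def2 _ _ (Hc x' p' Hs' Hb)). lra.
Qed.

Lemma cont2_on_cont_strip (U : R -> R -> Prop) (G F : R -> R -> R) :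
  cont2_on U G -> (forall x p, strip x p -> U x p) ->
  (forall x p, strip x p -> G x p = F x p) -> cont_strip F.
Proof.
  intros HG HU HGF x p Hs e He.
  destruct (HG x p (HU x p Hs) e He) as [d [Hd Hc]].
  exists d. split; [exact Hd|]. intros x' p' Hs' Hb.
  rewrite <- !HGF by assumption. exact (Hc x' p' Hb).
Qed.

Lemma H1_ext_cont_strip (H Hp : R -> R -> R) :
  H1_ext H ->
  (forall x p, -1 <= x <= 1 -> derivable_pt_lim (fun q => H x q) p (Hp x p)) ->
  cont_strip H /\ cont_strip Hp.
Proof.
  intros [eps [Heps [G [[G1 [G2 [G11 [G12 [G21 [G22 [Hder [cG [_ [cG2 _]]]]]]]]]] HGH]]]] hHp.
  assert (Hin : forall x p, strip x p -> -1 - eps < x < 1 + eps)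
    by (unfold strip; intros; lra).
  split; [exact (cont2_on_cont_strip _ _ _ cG Hin HGH)|].
  apply (cont2_on_cont_strip _ _ _ cG2 Hin). intros x p Hx.
  destruct (Hder x p (Hin x p Hx)) as [_ [HG2 _]].
  apply (uniqueness_limite (fun q => G x q) p); [exact HG2|].
  replace (fun q => G x q) with (fun q => H x q)
    by (apply functional_extensionality; intros q; symmetry; apply HGH; exact Hx).
  exact (hHp x p Hx).
Qed.

Lemma Rabs_div_lt w p e : p <> 0 -> Rabs w < e * Rabs p -> Rabs (w / p) < e.
Proof.
  intros Hp Hw. unfold Rdiv. rewrite Rabs_mult, Rabs_inv.
  assert (Hap : 0 < Rabs p) by (apply Rabs_pos_lt; exact Hp).
  apply (Rmult_lt_reg_r (Rabs p)); [exact Hap|].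
  rewrite Rmult_assoc, Rinv_l by lra. lra.
Qed.

Lemma derive_pos_increasing (f f' : R -> R) :
  (forall t, derivable_pt_lim f t (f' t)) -> (forall t, 0 < f' t) ->
  forall a b, a < b -> f a < f b.
Proof.
  intros Hd Hpos a b Hab.
  destruct (MVT_cor2 f f' a b Hab (fun c _ => Hd c)) as [c [E _]].
  specialize (Hpos c). nra.
Qed.

Lemma derivable_pt_lim_global_min (f : R -> R) m l :
  derivable_pt_lim f m l -> (forall q, f m <= f q) -> l = 0.
Proof.
  intros Hd Hmin.
  rewrite <- (derive_pt_eq_0 f m l (exist _ l Hd) Hd).
  apply (deriv_minimum f (m - 1) (m + 1)); [lra | lra | intros; apply Hmin].
Qed.

(* Mean value theorem on [0, s] and on [s, t s]; the two mean slopes are ordered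
   because [f'] increases. *)
Lemma convex_superhomogeneous (f f' f'' : R -> R) :
  (forall t, derivable_pt_lim f t (f' t)) ->
  (forall t, derivable_pt_lim f' t (f'' t)) ->
  (forall t, 0 < f'' t) -> f 0 = 0 ->
  forall s t, 1 <= t -> t * f s <= f (t * s).
Proof.
  intros Hd Hd2 Hpos f0 s t Ht.
  pose proof (derive_pos_increasing f' f'' Hd2 Hpos) as Hinc.
  destruct (Req_dec t 1) as [->|Ht1]; [rewrite !Rmult_1_l; lra|].
  destruct (Rtotal_order s 0) as [Hs|[->|Hs]].
  - destruct (MVT_cor2 f f' s 0 Hs (fun c _ => Hd c)) as [c1 [E1 Hc1]].
    destruct (MVT_cor2 f f' (t * s) s ltac:(nra) (fun c _ => Hd c)) as [c2 [E2 Hc2]].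
    pose proof (Hinc c2 c1 ltac:(lra)). nra.
  - rewrite Rmult_0_r, f0. lra.
  - destruct (MVT_cor2 f f' 0 s Hs (fun c _ => Hd c)) as [c1 [E1 Hc1]].
    destruct (MVT_cor2 f f' s (t * s) ltac:(nra) (fun c _ => Hd c)) as [c2 [E2 Hc2]].
    pose proof (Hinc c1 c2 ltac:(lra)). nra.
Qed.

Lemma nondecreasing_lim_minf (f : R -> R) m :
  (forall a b, a < b -> f a <= f b) -> (forall p, m <= f p) ->
  exists l, m <= l /\ lim_minf f l.
Proof.
  intros Hmono Hlb.
  destruct (completeness (fun y => exists p, y = - f p)) as [L [Hub Hleast]].
  - exists (- m). intros y [p ->]. specialize (Hlb p). lra.
  - exists (- f 0), 0. reflexivity.
  - exists (- L). split.
    + assert (L <= - m) by (apply Hleast; intros y [p ->]; specialize (Hlb p); lra).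
      lra.
    + intros e He.
      destruct (classic (exists p0, L - e < - f p0)) as [[p0 Hp0]|Hnone].
      * exists p0. intros p Hp. pose proof (Hmono p p0 Hp).
        pose proof (Hub (- f p) (ex_intro _ p eq_refl)). apply Rabs_def1; lra.
      * exfalso. assert (L <= L - e); [|lra]. apply Hleast. intros y [p ->].
        apply Rnot_lt_le. intros Hlt. apply Hnone. exists p. lra.
Qed.

(* l'Hopital at -oo: [f p - l p] is a fixed constant plus an increment whose
   slope is eventually within [e/2] of [l]. *)
Lemma lim_minf_div (f f' : R -> R) l :
  (forall t, derivable_pt_lim f t (f' t)) -> lim_minf f' l ->
  lim_minf (fun p => f p / p) l.
Proof.
  intros Hd Hlim e He.
  destruct (Hlim (e / 2) ltac:(lra)) as [P0 HP0].
  set (P1 := Rmin P0 0).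
  assert (HP1 : P1 <= P0 /\ P1 <= 0) by (split; [apply Rmin_l|apply Rmin_r]).
  set (A := f P1 - l * P1).
  exists (Rmin P1 (- (2 * Rabs A / e))). intros p Hp.
  pose proof (Rmin_l P1 (- (2 * Rabs A / e))).
  pose proof (Rmin_r P1 (- (2 * Rabs A / e))).
  assert (HA : Rabs A < e / 2 * Rabs p).
  { rewrite (Rabs_left p) by lra.
    assert (E : e * (2 * Rabs A / e) = 2 * Rabs A) by (field; lra). nra. }
  destruct (MVT_cor2 f f' p P1 ltac:(lra) (fun c _ => Hd c)) as [c [E Hc]].
  pose proof (HP0 c ltac:(lra)) as Hc'.
  assert (Hnum : f p - l * p = A + (f' c - l) * (p - P1)) by (unfold A; lra).
  replace (f p / p - l) with ((f p - l * p) / p) by (field; lra).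
  rewrite Hnum.
  apply Rabs_div_lt; [lra|].
  pose proof (Rabs_triang A ((f' c - l) * (p - P1))).
  assert (Rabs ((f' c - l) * (p - P1)) <= e / 2 * Rabs p).
  { rewrite Rabs_mult, (Rabs_left (p - P1)), (Rabs_left p) by lra.
    pose proof (Rabs_pos (f' c - l)). nra. }
  lra.
Qed.

Lemma lim_pinf_of_mirror (f g : R -> R) l :
  (forall p, g p = - f (- p)) -> lim_minf g l -> lim_pinf f (- l).
Proof.
  intros Hg Hlim e He. destruct (Hlim e He) as [P HP]. exists (- P).
  intros p Hp. specialize (HP (- p) ltac:(lra)). rewrite Hg, Ropp_involutive in HP.
  rewrite <- Rabs_Ropp. replace (- (f p - - l)) with (- f p - l) by ring. exact HP.
Qed.

Record convex_hamiltonian (H Hp Hpp : R -> R -> R) : Prop := ConvexHamiltonian {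
  hamiltonian_zero : forall x, -1 <= x <= 1 -> H x 0 = 0;
  hamiltonian_deriv : forall x p, -1 <= x <= 1 ->
    derivable_pt_lim (fun q => H x q) p (Hp x p);
  hamiltonian_deriv2 : forall x p, -1 <= x <= 1 ->
    derivable_pt_lim (fun q => Hp x q) p (Hpp x p);
  hamiltonian_convex : forall x p, -1 <= x <= 1 -> Hpp x p > 0;
  hamiltonian_cont : cont_strip H;
  hamiltonian_deriv_cont : cont_strip Hp }.

Definition argmin_diverges_left (H : R -> R -> R) : Prop :=
  forall M, exists d, d > 0 /\ forall x, -1 < x < -1 + d ->
    exists m, m < M /\ forall q, H x m <= H x q.

Definition superlinear_inside (H : R -> R -> R) : Prop :=
  forall u v, -1 < u -> v < 1 -> forall M, exists P,
    forall x p, u <= x <= v -> P < Rabs p -> M * Rabs p <= H x p.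

Definition hreflect (G : R -> R -> R) (x p : R) : R := G (- x) (- p).

Lemma ball2_opp x p d x' p' : ball2 (- x) (- p) d (- x') (- p') = ball2 x p d x' p'.
Proof. unfold ball2. f_equal. ring. Qed.

Lemma cont_strip_hreflect (G : R -> R -> R) : cont_strip G -> cont_strip (hreflect G).
Proof.
  unfold cont_strip, hreflect, strip. intros HG x p Hx e He.
  destruct (HG (- x) (- p) ltac:(lra) e He) as [d [Hd Hc]].
  exists d. split; [exact Hd|]. intros x' p' Hx' Hb.
  apply Hc; [lra|]. rewrite ball2_opp. exact Hb.
Qed.

Lemma cont_strip_opp (G : R -> R -> R) : cont_strip G -> cont_strip (fun x p => - G x p).
Proof.
  intros HG x p Hx e He. destruct (HG x p Hx e He) as [d [Hd Hc]].
  exists d. split; [exact Hd|]. intros x' p' Hx' Hb.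
  rewrite <- Rabs_Ropp. replace (- (- G x' p' - - G x p)) with (G x' p' - G x p) by ring.
  exact (Hc x' p' Hx' Hb).
Qed.

Lemma derivable_pt_lim_mirror (f : R -> R) p l :
  derivable_pt_lim f (- p) l -> derivable_pt_lim (fun q => f (- q)) p (- l).
Proof.
  intros Hf. apply (derivable_pt_lim_mirr_fwd f). rewrite Ropp_involutive. exact Hf.
Qed.

Lemma convex_hamiltonian_hreflect (H Hp Hpp : R -> R -> R) :
  convex_hamiltonian H Hp Hpp ->
  convex_hamiltonian (hreflect H) (fun x p => - hreflect Hp x p) (hreflect Hpp).
Proof.
  intros [H0 hHp hHpp hconv Hcont Hpcont]. unfold hreflect.
  constructor.
  - intros x Hx. rewrite Ropp_0. apply H0. lra.
  - intros x p Hx. apply (derivable_pt_lim_mirror (fun q => H (- x) q)), hHp. lra.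
  - intros x p Hx.
    replace (Hpp (- x) (- p)) with (- - Hpp (- x) (- p)) by ring.
    apply (derivable_pt_lim_opp (fun q => Hp (- x) (- q))).
    apply (derivable_pt_lim_mirror (fun q => Hp (- x) q)), hHpp. lra.
  - intros x p Hx. apply hconv. lra.
  - exact (cont_strip_hreflect H Hcont).
  - exact (cont_strip_opp _ (cont_strip_hreflect Hp Hpcont)).
Qed.

Lemma H4_argmin_hreflect (H : R -> R -> R) : H4 H -> argmin_diverges_left (hreflect H).
Proof.
  intros [_ Hright] M. destruct (Hright (- M)) as [d [Hd Hmin]].
  exists d. split; [exact Hd|]. intros x Hx.
  destruct (Hmin (- x) ltac:(lra)) as [m [Hm Hmm]].
  exists (- m). split; [lra|]. intros q. unfold hreflect.
  rewrite Ropp_involutive. apply Hmm.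
Qed.

Lemma H3_superlinear_inside (H : R -> R -> R) : H3 H -> superlinear_inside H.
Proof.
  intros [HK _] u v Hu Hv M.
  destruct (HK (fun x => u <= x <= v) (compact_P3 u v) ltac:(intros; lra) M) as [P HP].
  exists (Rmax P 0). intros x p Hx Hp.
  pose proof (Rmax_l P 0). pose proof (Rmax_r P 0).
  pose proof (HP x p Hx ltac:(lra)) as Hratio.
  replace (H x p) with (H x p / Rabs p * Rabs p) by (field; lra).
  apply Rmult_le_compat_r; lra.
Qed.

Lemma superlinear_inside_hreflect (H : R -> R -> R) :
  superlinear_inside H -> superlinear_inside (hreflect H).
Proof.
  intros Hs u v Hu Hv M. destruct (Hs (- v) (- u) ltac:(lra) ltac:(lra) M) as [P HP].
  exists P. intros x p Hx Hp. unfold hreflect.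
  rewrite <- Rabs_Ropp. apply HP; [lra|]. rewrite Rabs_Ropp. exact Hp.
Qed.

Section LeftEnd.

Variables H Hp Hpp : R -> R -> R.
Hypothesis hH : convex_hamiltonian H Hp Hpp.

Lemma Hp_increasing x a b : -1 <= x <= 1 -> a < b -> Hp x a < Hp x b.
Proof.
  intros Hx. apply (derive_pos_increasing (Hp x) (Hpp x)).
  - intros t. exact (hamiltonian_deriv2 _ _ _ hH x t Hx).
  - intros t. exact (hamiltonian_convex _ _ _ hH x t Hx).
Qed.

Lemma H_superhomogeneous x s t : -1 <= x <= 1 -> 1 <= t -> t * H x s <= H x (t * s).
Proof.
  intros Hx. apply (convex_superhomogeneous (H x) (Hp x) (Hpp x)).
  - intros u. exact (hamiltonian_deriv _ _ _ hH x u Hx).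
  - intros u. exact (hamiltonian_deriv2 _ _ _ hH x u Hx).
  - intros u. exact (hamiltonian_convex _ _ _ hH x u Hx).
  - exact (hamiltonian_zero _ _ _ hH x Hx).
Qed.

Hypothesis hargmin : argmin_diverges_left H.

(* If [Hp (-1) p < 0], then [Hp x p < 0] for some [x > -1] whose minimiser [m] lies
   below [p]; but [Hp x m = 0] and [Hp x] increases. *)
Lemma Hp_left_nonneg p : 0 <= Hp (-1) p.
Proof.
  apply Rnot_lt_le. intros Hneg.
  destruct (cont_strip_lt Hp 0 (-1) p (hamiltonian_deriv_cont _ _ _ hH)
              ltac:(unfold strip; lra) Hneg) as [d1 [Hd1 Hnear]].
  destruct (hargmin p) as [d2 [Hd2 Hmin]].
  set (x := -1 + Rmin (Rmin d1 d2) 1 / 2).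
  pose proof (Rmin_l (Rmin d1 d2) 1). pose proof (Rmin_r (Rmin d1 d2) 1).
  pose proof (Rmin_l d1 d2). pose proof (Rmin_r d1 d2).
  assert (Hpos : 0 < Rmin (Rmin d1 d2) 1) by (repeat apply Rmin_glb_lt; lra).
  assert (Hx : -1 <= x <= 1) by (unfold x; lra).
  destruct (Hmin x ltac:(unfold x; lra)) as [m [Hm Hmm]].
  assert (Hm0 : Hp x m = 0)
    by exact (derivable_pt_lim_global_min _ m _ (hamiltonian_deriv _ _ _ hH x m Hx) Hmm).
  pose proof (Hp_increasing x m p Hx Hm).
  assert (Hb : ball2 (-1) p d1 x p) by (unfold ball2, x; nra).
  pose proof (Hnear x p Hx Hb). lra.
Qed.

Lemma Hp_left_pos p : 0 < Hp (-1) p.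
Proof.
  pose proof (Hp_left_nonneg (p - 1)).
  pose proof (Hp_increasing (-1) (p - 1) p ltac:(lra) ltac:(lra)). lra.
Qed.

Lemma left_asymptotic_slope :
  exists v, 0 <= v /\ lim_minf (fun p => Hp (-1) p) v /\
    lim_minf (fun p => H (-1) p / p) v.
Proof.
  destruct (nondecreasing_lim_minf (Hp (-1)) 0) as [v [Hv Hlim]].
  - intros a b Hab. left. apply Hp_increasing; lra.
  - intros p. apply Hp_left_nonneg.
  - exists v. split; [exact Hv|]. split; [exact Hlim|].
    apply (lim_minf_div (H (-1)) (Hp (-1))); [|exact Hlim].
    intros t. apply (hamiltonian_deriv _ _ _ hH). lra.
Qed.

Lemma H_large_on_left a c :
  superlinear_inside H -> a < 1 ->
  exists P, forall x p, -1 <= x <= a -> P < p -> c < H x p.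
Proof.
  intros Hsl Ha.
  assert (Hh : 0 < H (-1) 1).
  { destruct (MVT_cor2 (H (-1)) (Hp (-1)) 0 1 ltac:(lra)
      (fun t _ => hamiltonian_deriv _ _ _ hH (-1) t ltac:(lra))) as [t [E _]].
    rewrite (hamiltonian_zero _ _ _ hH (-1) ltac:(lra)) in E.
    pose proof (Hp_left_pos t). lra. }
  destruct (cont_strip_gt H (H (-1) 1 / 2) (-1) 1 (hamiltonian_cont _ _ _ hH)
              ltac:(unfold strip; lra) ltac:(lra)) as [d [Hd Hnear]].
  destruct (Hsl (-1 + d / 2) a ltac:(lra) Ha (Rabs c + 1)) as [P HP].
  exists (Rmax (Rmax P 1) (2 * Rabs c / H (-1) 1)). intros x p Hx Hlarge.
  pose proof (Rmax_l (Rmax P 1) (2 * Rabs c / H (-1) 1)).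
  pose proof (Rmax_r (Rmax P 1) (2 * Rabs c / H (-1) 1)).
  pose proof (Rmax_l P 1). pose proof (Rmax_r P 1).
  pose proof (Rle_abs c).
  destruct (Rlt_or_le x (-1 + d / 2)) as [Hnear_end|Hinside].
  - assert (Hb : ball2 (-1) 1 d x 1) by (unfold ball2; nra).
    pose proof (Hnear x 1 ltac:(unfold strip; lra) Hb).
    pose proof (H_superhomogeneous x 1 p ltac:(lra) ltac:(lra)) as Hs.
    rewrite Rmult_1_r in Hs.
    assert (E : H (-1) 1 * (2 * Rabs c / H (-1) 1) = 2 * Rabs c) by (field; lra).
    nra.
  - pose proof (HP x p ltac:(lra) ltac:(rewrite (Rabs_right p); lra)) as Hgrowth.
    rewrite (Rabs_right p) in Hgrowth by lra.
    pose proof (Rabs_pos c). nra.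
Qed.

End LeftEnd.

Definition sublevel_outside_quadrants (G : R -> R -> R) (c a q b r x p : R) : Prop :=
  strip x p /\
  ~ (rel_interior strip (Qplus a q) x p \/ rel_interior strip (Qminus b r) x p) /\
  G x p <= c.

Lemma sublevel_outside_quadrants_bounded (G : R -> R -> R) c a q b r Pu Pl x p :
  (forall x p, -1 <= x <= a -> Pu < p -> c < G x p) ->
  (forall x p, b <= x <= 1 -> p < Pl -> c < G x p) ->
  sublevel_outside_quadrants G c a q b r x p -> Rmin Pl r <= p <= Rmax Pu q.
Proof.
  unfold sublevel_outside_quadrants, strip.
  intros Hup Hlow [Hx [Hout Hc]].
  pose proof (Rmax_l Pu q). pose proof (Rmax_r Pu q).
  pose proof (Rmin_l Pl r). pose proof (Rmin_r Pl r).
  split; apply Rnot_lt_le; intros Hp.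
  - destruct (Rlt_or_le x b) as [Hxb|Hxb].
    + apply Hout. right. apply Qminus_rel_interior; lra.
    + pose proof (Hlow x p ltac:(lra) ltac:(lra)). lra.
  - destruct (Rlt_or_le a x) as [Hax|Hax].
    + apply Hout. left. apply Qplus_rel_interior; lra.
    + pose proof (Hup x p ltac:(lra) ltac:(lra)). lra.
Qed.

Lemma sublevel_outside_quadrants_closed (G : R -> R -> R) c a q b r :
  cont_strip G -> open2 (fun x p => ~ sublevel_outside_quadrants G c a q b r x p).
Proof.
  unfold sublevel_outside_quadrants. intros HG x p Hnot.
  destruct (classic (strip x p)) as [Hs|Hns].
  2:{ destruct (not_strip_nbhd x p Hns) as [d [Hd Hball]].
      exists d. split; [exact Hd|]. intros x' p' Hb [Hs' _]. exact (Hball x' p' Hb Hs'). }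
  destruct (classic (rel_interior strip (Qplus a q) x p)) as [Hq|Hnq].
  { destruct (rel_interior_nbhd _ _ x p Hq) as [d [Hd Hball]].
    exists d. split; [exact Hd|]. intros x' p' Hb [Hs' [Hout _]].
    apply Hout. left. exact (Hball x' p' Hb Hs'). }
  destruct (classic (rel_interior strip (Qminus b r) x p)) as [Hq|Hnq'].
  { destruct (rel_interior_nbhd _ _ x p Hq) as [d [Hd Hball]].
    exists d. split; [exact Hd|]. intros x' p' Hb [Hs' [Hout _]].
    apply Hout. right. exact (Hball x' p' Hb Hs'). }
  assert (Hgt : c < G x p).
  { apply Rnot_le_lt. intros Hle. apply Hnot. split; [exact Hs|].
    split; [intros [?|?]; contradiction|exact Hle]. }
  destruct (cont_strip_gt G c x p HG Hs Hgt) as [d [Hd Hball]].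
  exists d. split; [exact Hd|]. intros x' p' Hb [Hs' [_ Hc]].
  pose proof (Hball x' p' Hs' Hb). lra.
Qed.

Lemma sublevel_outside_quadrants_compact (G : R -> R -> R) c a q b r Pu Pl :
  cont_strip G ->
  (forall x p, -1 <= x <= a -> Pu < p -> c < G x p) ->
  (forall x p, b <= x <= 1 -> p < Pl -> c < G x p) ->
  compact2 (sublevel_outside_quadrants G c a q b r).
Proof.
  intros HG Hup Hlow.
  apply (compact2_closed_subset _ _
           (RectangleCompact.compact2_rectangle (-1) 1 (Rmin Pl r) (Rmax Pu q))).
  - intros x p HS.
    destruct (sublevel_outside_quadrants_bounded G c a q b r Pu Pl x p Hup Hlow HS).
    destruct HS as [Hx _]. unfold strip in Hx. lra.
  - exact (sublevel_outside_quadrants_closed G c a q b r HG).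
Qed.


Lemma hreflect_at_left (G : R -> R -> R) p : hreflect G (-1) p = G 1 (- p).
Proof. unfold hreflect. f_equal. lra. Qed.

Lemma Hp_right_neg (H Hp Hpp : R -> R -> R) :
  convex_hamiltonian H Hp Hpp -> H4 H -> forall p, Hp 1 p < 0.
Proof.
  intros hH HH4 p.
  pose proof (Hp_left_pos _ _ _ (convex_hamiltonian_hreflect _ _ _ hH)
                (H4_argmin_hreflect H HH4) (- p)) as Hpos.
  cbv beta in Hpos. rewrite hreflect_at_left, Ropp_involutive in Hpos. lra.
Qed.

Lemma right_asymptotic_slope (H Hp Hpp : R -> R -> R) :
  convex_hamiltonian H Hp Hpp -> H4 H ->
  exists v, v <= 0 /\ lim_pinf (fun p => Hp 1 p) v /\ lim_pinf (fun p => H 1 p / p) v.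
Proof.
  intros hH HH4.
  destruct (left_asymptotic_slope _ _ _ (convex_hamiltonian_hreflect _ _ _ hH)
              (H4_argmin_hreflect H HH4)) as [w [Hw [Hlim Hdiv]]].
  exists (- w). split; [lra|]. split.
  - refine (lim_pinf_of_mirror _ _ w _ Hlim).
    intros p. cbv beta. rewrite hreflect_at_left. reflexivity.
  - refine (lim_pinf_of_mirror _ _ w _ Hdiv).
    intros p. rewrite hreflect_at_left. unfold Rdiv. rewrite Rinv_opp. ring.
Qed.

Lemma H_large_on_right (H Hp Hpp : R -> R -> R) b c :
  convex_hamiltonian H Hp Hpp -> H4 H -> superlinear_inside H -> -1 < b ->
  exists P, forall x p, b <= x <= 1 -> p < P -> c < H x p.
Proof.
  intros hH HH4 Hsl Hb.
  destruct (H_large_on_left _ _ _ (convex_hamiltonian_hreflect _ _ _ hH)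
              (H4_argmin_hreflect H HH4) (- b) c (superlinear_inside_hreflect H Hsl)
              ltac:(lra)) as [P HP].
  exists (- P). intros x p Hx Hlarge.
  replace (H x p) with (hreflect H (- x) (- p))
    by (unfold hreflect; rewrite !Ropp_involutive; reflexivity).
  apply HP; lra.
Qed.

Theorem mainTheorem9 (H Hp Hpp : R -> R -> R)
  (H0 : forall x, -1 <= x <= 1 -> H x 0 = 0)
  (HH1 : H1_ext H)
  (hHp : forall x p, -1 <= x <= 1 -> derivable_pt_lim (fun q => H x q) p (Hp x p))
  (hHpp : forall x p, -1 <= x <= 1 -> derivable_pt_lim (fun q => Hp x q) p (Hpp x p))
  (hconv : forall x p, -1 <= x <= 1 -> Hpp x p > 0)
  (HH4 : H4 H) :
  (exists vm vp : R,
      0 <= vm /\ vp <= 0 /\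
      lim_minf (fun p => Hp (-1) p) vm /\
      lim_pinf (fun p => Hp 1 p) vp /\
      lim_minf (fun p => H (-1) p / p) vm /\
      lim_pinf (fun p => H 1 p / p) vp /\
      (forall p, Hp (-1) p > 0) /\ (forall p, Hp 1 p < 0)) /\
  (H3 H ->
   forall c a q b r : R, -1 < a < 1 -> 0 < q -> -1 < b < 1 -> r < 0 ->
   compact2 (fun x p =>
     strip x p /\
     ~ (rel_interior strip (Qplus a q) x p \/ rel_interior strip (Qminus b r) x p) /\
     H x p <= c)).
Proof.
  destruct (H1_ext_cont_strip H Hp HH1 hHp) as [Hcont Hpcont].
  pose proof (ConvexHamiltonian H Hp Hpp H0 hHp hHpp hconv Hcont Hpcont) as hH.
  split.
  - destruct (left_asymptotic_slope H Hp Hpp hH (proj1 HH4)) as [vm [Hvm [Hlm Hdm]]].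
    destruct (right_asymptotic_slope H Hp Hpp hH HH4) as [vp [Hvp [Hlp Hdp]]].
    exists vm, vp. repeat split; try assumption.
    + exact (Hp_left_pos H Hp Hpp hH (proj1 HH4)).
    + exact (Hp_right_neg H Hp Hpp hH HH4).
  - intros HH3 c a q b r Ha Hq Hb Hr.
    pose proof (H3_superlinear_inside H HH3) as Hsl.
    destruct (H_large_on_left H Hp Hpp hH (proj1 HH4) a c Hsl ltac:(lra)) as [Pu Hup].
    destruct (H_large_on_right H Hp Hpp b c hH HH4 Hsl ltac:(lra)) as [Pl Hlow].
    exact (sublevel_outside_quadrants_compact H c a q b r Pu Pl Hcont Hup Hlow).
Qed.
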